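(* Let $q$ be an odd prime power and let $f:\mathbb{F}_q\to\mathbb{F}_q$, $f(x)=x^2$, viewed as a function on the additive group of the finite field $\mathbb{F}_q$. Then $\mathrm{pres}(f)\le \lceil 2\sqrt{q-1}\rceil-1$.
   Context: For a function $g:\mathbb{F}_q\to\mathbb{F}_q$, $V(g)=\#\{g(x):x\in\mathbb{F}_q\}$. The permutation resemblance of $f$ is $\mathrm{pres}(f)=\min\{V(g): g:\mathbb{F}_q\to\mathbb{F}_q,\ x\mapsto g(x)+f(x) \text{ is a bijection of } \mathbb{F}_q\}$. *)

From mathcomp Require Import all_boot all_order all_algebra all_field.
Set Implicit Arguments. Unset Strict Implicit. Unset Printing Implicit Defensive.
Import GRing.Theory.
Local Open Scope ring_scope.

Definition Vcard (F : finFieldType) (g : F -> F) : nat := #|[set g x | x : F]|.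

(* The minimum is over all functions g : F -> F (represented as finite functions);
   the set is nonempty (g = -f + id) and V(g) <= #|F|, so #|F| is a neutral default. *)
Definition pres (F : finFieldType) (f : F -> F) : nat :=
  \big[minn/#|F|]_(g : {ffun F -> F} | injectiveb (fun x => g x + f x)) Vcard g.

(* ceil(2 sqrt(m)) = least n : nat with 4 m <= n^2 *)
Lemma ceil2sqrt_ex (m : nat) : exists n : nat, (4 * m <= n ^ 2)%N.
Proof. exists (4 * m)%N; case: m => [|m] //; rewrite expnS expn1 leq_pmulr //. Qed.

Definition ceil2sqrt (m : nat) : nat := ex_minn (ceil2sqrt_ex m).

From mathcomp Require Import all_boot all_order all_algebra all_field zify.
Set Implicit Arguments. Unset Strict Implicit. Unset Printing Implicit Defensive.
Import Order.TTheory GRing.Theory.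
Local Open Scope ring_scope.

(* Let S contain one element of each pair {x, -x}. Squaring is injective on S
   and on its complement, and already maps S onto all squares, so we take
   g = 0 on S, and on the complement we let x |-> g x + x^2 send the (q-1)/2
   nonzero squares injectively to the (q-1)/2 non-squares through a map beta;
   the other values of g are then the shifts beta d - d. Such a beta is built
   greedily: for disjoint D, N of size m in a group of order q, averaging over
   c != 0 gives a shift c moving at least m^2/(q-1) points of D into N. If
   s m <= q - 1, the part left unmatched satisfies (s+1) m' <= q - 1, so after
   t rounds starting from s = 2 what remains has at most (q-1)/(2+t) points,
   matched arbitrarily. Choosing 2 + t = ceil(L/2) with L = ceil(2 sqrt(q-1))
   gives at most L - 1 values. *)

Section ShiftInjection.
Variable V : finZmodType.
Implicit Types (D N : {set V}) (c : V) (k : nat).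

Definition shifts (beta : V -> V) D := [set beta d - d | d in D].

Definition shift_injection k D N := exists beta : V -> V,
  [/\ {in D &, injective beta}, {in D, forall d, beta d \in N}
    & (#|shifts beta D| <= k)%N].

Definition shift_hits D N c := [set d in D | d + c \in N].

Lemma shift_injection_leq k k' D N :
  (k <= k')%N -> shift_injection k D N -> shift_injection k' D N.
Proof.
by move=> le_kk' [b [bI bN bk]]; exists b; split=> //; exact: leq_trans le_kk'.
Qed.

Lemma shift_injection_set0 k N : shift_injection k set0 N.
Proof. by exists id; split=> [x y|x|]; rewrite ?inE // /shifts imset0 cards0. Qed.

Lemma shift_hits_sub D N c : shift_hits D N c \subset D.
Proof. by apply/subsetP=> d; rewrite inE => /andP[]. Qed.

Lemma shift_hits_shift_sub D N c : [set d + c | d in shift_hits D N c] \subset N.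
Proof. by apply/subsetP=> _ /imsetP[d + ->]; rewrite inE => /andP[]. Qed.

Lemma card_shift_residualD D N c :
  #|D :\: shift_hits D N c| = (#|D| - #|shift_hits D N c|)%N.
Proof. by rewrite cardsD (setIidPr (shift_hits_sub D N c)). Qed.

Lemma card_shift_residualN D N c :
  #|N :\: [set d + c | d in shift_hits D N c]| = (#|N| - #|shift_hits D N c|)%N.
Proof.
by rewrite cardsD (setIidPr (shift_hits_shift_sub D N c)) (card_imset _ (addIr c)).
Qed.

Lemma shift_injection_extend c k D N :
  let H := shift_hits D N c in
  shift_injection k (D :\: H) (N :\: [set d + c | d in H]) ->
  shift_injection k.+1 D N.
Proof.
move=> H [b [bI bN bk]].
have bNH d : d \in D -> d \notin H -> b d \in N :\: [set d + c | d in H].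
  by move=> dD dH; apply: bN; rewrite in_setD dH.
exists (fun x => if x \in H then x + c else b x); split.
- move=> x y xD yD /=; case: ifP => xH; case: ifP => yH.
  + exact: addIr.
  + move=> exy; have := bNH y yD (negbT yH).
    by rewrite -exy in_setD (imset_f (fun d => d + c) xH).
  + move=> exy; have := bNH x xD (negbT xH).
    by rewrite exy in_setD (imset_f (fun d => d + c) yH).
  + by apply: bI; rewrite in_setD ?xH ?yH.
- move=> x xD /=; case: ifP => xH; first by move: xH; rewrite inE => /andP[].
  by have /setDP[] := bNH x xD (negbT xH).
- apply: (@leq_trans #|c |: shifts b (D :\: H)|).
    apply/subset_leq_card/subsetP=> _ /imsetP[d dD ->]; rewrite in_setU1.
    case: ifP => dH; first by rewrite addrC addKr eqxx.
    by apply/orP; right; apply: imset_f; rewrite in_setD dH.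
  by rewrite cardsU1 addnC -addn1 leq_add // leq_b1.
Qed.

Lemma shift_injection_card D N : #|D| = #|N| -> shift_injection #|D| D N.
Proof.
have [m ltDm] := ubnP #|D|; elim: m D N ltDm => // m IH D N ltDm eqDN.
have [->|[d dD]] := set_0Vmem D; first exact: shift_injection_set0.
have [n nN] : exists n, n \in N.
  by apply/card_gt0P; rewrite -eqDN; apply/card_gt0P; exists d.
have hits_gt0 : (0 < #|shift_hits D N (n - d)%R|)%N.
  by apply/card_gt0P; exists d; rewrite inE dD addrC subrK nN.
have leHD := subset_leq_card (shift_hits_sub D N (n - d)).
apply: shift_injection_leq (shift_injection_extend (c := n - d) (IH _ _ _ _)).
- by rewrite card_shift_residualD; lia.
- by rewrite card_shift_residualD; lia.
- by rewrite card_shift_residualD card_shift_residualN eqDN.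
Qed.

Lemma sum_card_shift_hits D N : (\sum_c #|shift_hits D N c| = #|D| * #|N|)%N.
Proof.
have hitsE c : #|shift_hits D N c| = (\sum_(d in D) ((d + c)%R \in N))%N.
  rewrite -sum1_card big_set /= big_mkcondr /=.
  by apply: eq_bigr => d _; case: (_ \in N).
rewrite (eq_bigr _ (fun c _ => hitsE c)) exchange_big /= -sum_nat_const.
apply: eq_bigr => d _.
rewrite -(card_preimset N (addrI d)) -sum1_card [RHS]big_mkcond /=.
by apply: eq_bigr => c _; rewrite inE.
Qed.

Lemma shift_hits0 D N : [disjoint D & N] -> shift_hits D N 0 = set0.
Proof.
move=> dDN; apply/setP=> d; rewrite !inE addr0.
by case dD: (d \in D); rewrite //= (disjointFr dDN dD).
Qed.

Lemma exists_large_shift_hits D N : [disjoint D & N] -> #|D| = #|N| ->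
  exists c, (#|D| * #|D| <= #|shift_hits D N c| * #|V|.-1)%N.
Proof.
move=> dDN eqDN; exists [arg max_(c > (0 : V)) #|shift_hits D N c|].
have := sum_card_shift_hits D N.
rewrite -eqDN (bigD1 0) //= shift_hits0 // cards0 add0n => <-.
case: arg_maxnP => //= c _ c_max.
apply: (@leq_trans (\sum_(i | i != 0) #|shift_hits D N c|)).
  by apply: leq_sum => i _; apply: c_max.
by rewrite sum_nat_const cardC1 mulnC.
Qed.

Lemma shift_injection_greedy t s D N :
  [disjoint D & N] -> #|D| = #|N| -> (0 < s)%N -> (s * #|D| <= #|V|.-1)%N ->
  shift_injection (t + #|V|.-1 %/ (s + t)) D N.
Proof.
elim: t s D N => [|t IH] s D N dDN eqDN s_gt0 sD.
  apply: shift_injection_leq (shift_injection_card eqDN).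
  by rewrite add0n addn0 leq_divRL // mulnC.
have [c hits_large] := exists_large_shift_hits dDN eqDN.
have leHD := subset_leq_card (shift_hits_sub D N c).
apply: shift_injection_leq
  (shift_injection_extend (c := c) (IH s.+1 _ _ _ _ _ _)) => //.
- by rewrite !addSn addnS.
- exact: disjointW (subsetDl _ _) (subsetDl _ _) dDN.
- by rewrite card_shift_residualD card_shift_residualN eqDN.
- rewrite card_shift_residualD; nia.
Qed.

End ShiftInjection.

Lemma pres_le_Vcard (F : finFieldType) (f : F -> F) (g : {ffun F -> F}) :
  injective (fun x => g x + f x) -> (pres f <= Vcard g)%N.
Proof.
by move=> /injectiveP gfI; rewrite /pres -minEnat -leEnat; apply: bigmin_le_cond.
Qed.

Lemma pres_le_shift_injection (F : finFieldType) (f : F -> F) (S : {set F}) k :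
  {in S &, injective f} -> {in ~: S &, injective f} ->
  shift_injection k (f @: ~: S) (~: (f @: S)) -> (pres f <= k.+1)%N.
Proof.
move=> fIS fIC [b [bI bN bk]].
have fC x : x \notin S -> f x \in f @: ~: S by move=> xS; rewrite imset_f ?inE.
have bfS x y : x \notin S -> y \in S -> b (f x) != f y.
  by move=> xS yS; apply: contraTneq (bN _ (fC x xS)) => ->; rewrite inE imset_f.
pose g := [ffun x => (if x \in S then f x else b (f x)) - f x].
apply: leq_trans (pres_le_Vcard (g := g) _) _.
  move=> x y; rewrite !ffunE !subrK.
  case: ifPn => xS; case: ifPn => yS.
  - exact: fIS.
  - by move=> fxy; have := bfS y x yS xS; rewrite fxy eqxx.
  - by move=> fxy; have := bfS x y xS yS; rewrite fxy eqxx.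
  - by move/(bI _ _ (fC x xS) (fC y yS)); apply: fIC; rewrite inE.
apply: (@leq_trans #|0 |: shifts b (f @: ~: S)|).
  apply/subset_leq_card/subsetP=> _ /imsetP[x _ ->]; rewrite ffunE in_setU1.
  case: ifPn => xS; first by rewrite subrr eqxx.
  by apply/orP; right; apply: imset_f; apply: fC.
by rewrite cardsU1 addnC -addn1 leq_add // leq_b1.
Qed.

Lemma pres_le_greedy (F : finFieldType) (f : F -> F) (S : {set F}) s t :
  {in S &, injective f} -> {in ~: S &, injective f} ->
  (f @: ~: S) \subset (f @: S) -> (0 < s)%N -> (s * #|~: S| <= #|F|.-1)%N ->
  (pres f <= (t + #|F|.-1 %/ (s + t)).+1)%N.
Proof.
move=> fIS fIC fCS s_gt0 sS; apply: (pres_le_shift_injection fIS fIC).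
apply: shift_injection_greedy; rewrite ?(card_in_imset fIC) //.
- by rewrite disjoints_subset setCK.
- apply/eqP; rewrite -(eqn_add2l #|f @: S|) cardsC.
  by rewrite (card_in_imset fIS) cardsC.
Qed.

Section OppHalf.
Variable V : finZmodType.

Definition opp_half : {set V} := [set x | enum_rank x <= enum_rank (- x)]%N.

Lemma opp_half0 : 0 \in opp_half.
Proof. by rewrite inE oppr0. Qed.

Lemma opp_halfNC x : x \notin opp_half -> - x \in opp_half.
Proof. by rewrite !inE opprK -ltnNge => /ltnW. Qed.

Lemma opp_half_oppE x : x \in opp_half -> - x \in opp_half -> - x = x.
Proof.
rewrite !inE opprK => le_xNx le_Nxx.
by apply/enum_rank_inj/val_inj/eqP; rewrite eqn_leq le_xNx le_Nxx.
Qed.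

Lemma card_opp_halfC : (2 * #|~: opp_half| <= #|V|.-1)%N.
Proof.
have NC_proper : [set - x | x in ~: opp_half] \proper opp_half.
  apply/properP; split.
    by apply/subsetP=> _ /imsetP[x + ->]; rewrite inE; apply: opp_halfNC.
  exists 0; first exact: opp_half0.
  apply/imsetP=> -[x]; rewrite inE => /negP xC /eqP.
  by rewrite eq_sym oppr_eq0 => /eqP x0; apply: xC; rewrite x0 opp_half0.
have lt_C_half : (#|~: opp_half| < #|opp_half|)%N.
  by rewrite -(card_imset _ (@oppr_inj V)); apply: proper_card.
rewrite -(cardsC opp_half); lia.
Qed.

End OppHalf.

Section Squares.
Variable R : finIdomainType.

Lemma sqr_inj_opp_half : {in opp_half R &, injective (fun x : R => x ^+ 2)}.
Proof.
move=> x y xH yH /eqP; rewrite eqf_sqr => /orP[/eqP // | /eqP xNy].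
by move: xH; rewrite xNy => NyH; rewrite (opp_half_oppE yH NyH).
Qed.

Lemma sqr_inj_opp_halfC : {in ~: opp_half R &, injective (fun x : R => x ^+ 2)}.
Proof.
move=> x y; rewrite !in_setC => xC yC /eqP.
rewrite eqf_sqr => /orP[/eqP // | /eqP xNy].
by move: xC; rewrite xNy opp_halfNC.
Qed.

Lemma sqr_opp_halfC_sub :
  [set x ^+ 2 | x in ~: opp_half R] \subset [set x ^+ 2 | x in opp_half R].
Proof.
apply/subsetP=> _ /imsetP[x + ->]; rewrite in_setC => xC.
by rewrite -sqrrN; apply: imset_f; apply: opp_halfNC.
Qed.

End Squares.

Lemma greedy_rounds_bound M L : (2 <= M)%N -> (4 * M <= L ^ 2)%N ->
  exists t, ((t + M %/ (2 + t)).+1 <= L - 1)%N.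
Proof.
move=> M_ge2 ML; pose T := (L.+1 %/ 2)%N; exists (T - 2)%N.
have T_ge2 : (2 <= T)%N by rewrite /T; nia.
have M_le : (M <= T * (L - T))%N by rewrite /T; nia.
rewrite subnKC //.
have : (M %/ T <= L - T)%N by rewrite -ltnS ltn_divLR; nia.
lia.
Qed.

Theorem corollary5p1 (F : finFieldType) (hodd : odd #|F|) :
  (pres (fun x : F => x ^+ 2) <= ceil2sqrt (#|F|.-1) - 1)%N.
Proof.
have card_ge2 : (2 <= #|F|.-1)%N.
  by move: hodd (finNzRing_gt1 F); case: #|F| => [|[|[]]].
rewrite /ceil2sqrt; case: ex_minnP => L sqrt_le_L _.
have [t bound] := greedy_rounds_bound card_ge2 sqrt_le_L.
apply: leq_trans bound.
apply: pres_le_greedy (card_opp_halfC F) => //.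
- exact: sqr_inj_opp_half.
- exact: sqr_inj_opp_halfC.
- exact: sqr_opp_halfC_sub.
Qed.
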